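(* With the notation of the context, for every $\alpha\in\mathbb{R}$ the set $$\varphi(\ell_\alpha)\cap M=\left\{\left(x_j^*,\ \alpha+\frac{\lambda x_j}{d}\bmod\frac1d\right):\ j\in\mathbb{Z}\right\}$$ is a dense subset of $$L_\alpha:=\left\{\left(\xi,\ \alpha-\frac{\lambda^*}{d}\xi\bmod\frac1d\right):\ 0\le\xi<\cos\theta+\sin\theta\right\}\subset M.$$
   Context: Let $0<\theta<\pi/2$ with $\tan\theta$ irrational, $\epsilon=\cos\theta+\sin\theta$, $\Lambda_F=\{m\cos\theta-n\sin\theta:\ m,n\in\mathbb{Z},\ 0\le m\sin\theta+n\cos\theta<\epsilon\}$, $\Lambda=\Lambda_F\times\mathbb{Z}$. For $x=m\cos\theta-n\sin\theta$ ($m,n\in\mathbb{Z}$) put $x^*=m\sin\theta+n\cos\theta$. Enumerate $\Lambda_F=\{x_j\}_{j\in\mathbb{Z}}$ increasingly with $x_0=0$. Let $a,b,d\in\mathbb{Z}$ be relatively prime (gcd$(a,b,d)=1$) with $d>0$, $\lambda=a\cos\theta-b\sin\theta$, $\lambda^*=a\sin\theta+b\cos\theta$. Let $X$ be the quotient of $[0,\cos\theta)\times[0,1/d]\times[0,\cos\theta]\cup[\cos\theta,\cos\theta+\sin\theta)\times[0,1/d]\times[0,\sin\theta]$ by $(\xi,0,\zeta)\sim(\xi,1/d,\zeta)$, $(\xi,\eta,\cos\theta)\sim(\xi+\sin\theta,\eta,0)$ for $0\le\xi<\cos\theta$, and $(\xi,\eta,\sin\theta)\sim(\xi-\cos\theta,\eta,0)$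 for $\cos\theta\le\xi<\cos\theta+\sin\theta$. Define $\varphi:\mathbb{R}^2\to X$ by $\varphi(x,y)=(x_j^*,\ y\bmod\frac1d,\ x-x_j)$ for $x_j\le x<x_{j+1}$. Let $M=[0,\cos\theta+\sin\theta)\times[0,1/d]$ with $(\xi,0)\sim(\xi,1/d)$ (i.e. second coordinate taken in $\mathbb{R}/\frac1d\mathbb{Z}$), identified with $M\times\{0\}\subset X$. For $\alpha\in\mathbb{R}$, $\ell_\alpha=\{(t,\alpha+t\lambda/d):\ t\in\mathbb{R}\}$. *)

From Stdlib Require Import Reals Lra Lia ZArith.
Open Scope R_scope.

(* a mod c, with result in [0,c) for c > 0 (floor = Int_part) *)
Definition Rmod (a c : R) : R := a - c * IZR (Int_part (a / c)).

Definition eps (th : R) : R := cos th + sin th.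

Definition pt (th : R) (m n : Z) : R := IZR m * cos th - IZR n * sin th.
Definition star (th : R) (m n : Z) : R := IZR m * sin th + IZR n * cos th.

(* (m,n) lies in the window, i.e. pt th m n is in Lambda_F *)
Definition window (th : R) (m n : Z) : Prop := 0 <= star th m n < eps th.

Definition lam (th : R) (a b : Z) : R := IZR a * cos th - IZR b * sin th.
Definition lamstar (th : R) (a b : Z) : R := IZR a * sin th + IZR b * cos th.

(* phi_rel th d x y p : p is the representative (x_j^*, y mod 1/d, x - x_j)
   of phi(x,y), where x_j = pt th m n is the largest element of Lambda_F
   with x_j <= x (i.e. x_j <= x < x_{j+1}). *)
Definition phi_rel (th : R) (d : Z) (x y : R) (p : R * R * R) : Prop :=
  exists m n : Z,
    window th m n /\ pt th m n <= x /\
    (forall m' n' : Z, window th m' n' -> pt th m' n' <= x ->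
                       pt th m' n' <= pt th m n) /\
    p = (star th m n, Rmod y (/ IZR d), x - pt th m n).

(* phi(l_alpha) ∩ M, with M identified with M x {0} in X *)
Definition phi_line_cap_M (th : R) (a b d : Z) (al : R) (q : R * R) : Prop :=
  exists t : R,
    phi_rel th d t (al + t * lam th a b / IZR d) (fst q, snd q, 0).

Definition Sset (th : R) (a b d : Z) (al : R) (q : R * R) : Prop :=
  exists m n : Z, window th m n /\
    q = (star th m n, Rmod (al + lam th a b * pt th m n / IZR d) (/ IZR d)).

Definition Lset (th : R) (a b d : Z) (al : R) (q : R * R) : Prop :=
  0 <= fst q < eps th /\
  snd q = Rmod (al - lamstar th a b / IZR d * fst q) (/ IZR d).

(* A is dense in B, for subsets of M = [0,eps) x R/(1/d)Z
   (product of the usual topology and the circle topology). *)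
Definition dense_in_M (d : Z) (A B : R * R -> Prop) : Prop :=
  forall p, B p -> forall delta, 0 < delta ->
    exists q, A q /\ Rabs (fst p - fst q) < delta /\
      exists k : Z, Rabs (snd p - snd q - IZR k / IZR d) < delta.

From Stdlib Require Import Reals Lra Lia ZArith Classical.
Open Scope R_scope.

(* Since [lam * x + lamstar * x^* = a m + b n] for [x = m cos th - n sin th],
   the second coordinate [al + lam x_j / d] of a point of phi(l_al) ∩ M agrees
   modulo 1/d with [al - lamstar x_j^* / d]: the point lies on L_al.  The
   first coordinates x_j^* range over the points of [Z sin th + Z cos th] in
   the window [0, eps), and this subgroup of R is dense because tan th is
   irrational (a subgroup of R with a least positive element is cyclic, which
   would make tan th rational).  As L_al is the graph of a Lipschitz function
   of the first coordinate, density of the first coordinates gives density in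
   L_al. *)

Lemma Int_part_plus_IZR (r : R) (k : Z) : Int_part (r + IZR k) = (Int_part r + k)%Z.
Proof.
  symmetry; apply Int_part_spec; rewrite plus_IZR.
  destruct (base_Int_part r); lra.
Qed.

Lemma Rmod_plus_mult (y c : R) (k : Z) : c <> 0 -> Rmod (y + IZR k * c) c = Rmod y c.
Proof.
  intro Hc; unfold Rmod.
  replace ((y + IZR k * c) / c) with (y / c + IZR k) by (field; exact Hc).
  rewrite Int_part_plus_IZR, plus_IZR; ring.
Qed.

Lemma Rmod_minus_Rmod (y y' c : R) :
  exists k : Z, Rmod y c - Rmod y' c = y - y' + IZR k * c.
Proof.
  exists (Int_part (y' / c) - Int_part (y / c))%Z.
  unfold Rmod; rewrite minus_IZR; ring.
Qed.

Section DenseSubgroup.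

Variables u v : R.
Hypothesis Hv : 0 < v.
Hypothesis Hirr : ~ exists p q : Z, q <> 0%Z /\ u / v = IZR p / IZR q.

Definition comb (m n : Z) : R := IZR m * u + IZR n * v.

Lemma comb_minus (m n m' n' : Z) :
  comb (m - m') (n - n') = comb m n - comb m' n'.
Proof. unfold comb; rewrite !minus_IZR; ring. Qed.

Lemma comb_scale (k m n : Z) : comb (k * m) (k * n) = IZR k * comb m n.
Proof. unfold comb; rewrite !mult_IZR; ring. Qed.

Lemma comb_pos_glb : exists g, 0 <= g /\
  (forall m n, 0 < comb m n -> g <= comb m n) /\
  (forall y, g < y -> exists m n, 0 < comb m n < y).
Proof.
  set (E := fun r => exists m n, 0 < comb m n /\ r = - comb m n).
  assert (HE : exists r, E r).
  { exists (- comb 0 1), 0%Z, 1%Z; split; [unfold comb; simpl; lra | reflexivity]. }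
  assert (HEb : bound E) by (exists 0; intros r [m [n [H ->]]]; lra).
  destruct (completeness E HEb HE) as [M [HMub HMleast]].
  exists (- M); split; [|split].
  - assert (M <= 0) by (apply HMleast; intros r [m [n [H ->]]]; lra). lra.
  - intros m n H.
    assert (- comb m n <= M) by (apply HMub; exists m, n; auto). lra.
  - intros y Hy.
    apply NNPP; intro Hnone.
    assert (M <= - y); [|lra].
    apply HMleast; intros r [m [n [H ->]]].
    destruct (Rlt_dec (comb m n) y); [exfalso; apply Hnone; exists m, n|]; lra.
Qed.

(* Euclidean division by a least positive element leaves a remainder in the
   subgroup that is smaller than it, hence zero. *)
Lemma comb_multiple_of_min (m0 n0 : Z) :
  0 < comb m0 n0 -> (forall m n, 0 < comb m n -> comb m0 n0 <= comb m n) ->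
  forall m n, exists k : Z, comb m n = IZR k * comb m0 n0.
Proof.
  intros Hg Hmin m n.
  set (g := comb m0 n0) in *.
  set (k := Int_part (comb m n / g)).
  exists k.
  assert (Hk : IZR k <= comb m n / g < IZR k + 1).
  { destruct (base_Int_part (comb m n / g)); unfold k; lra. }
  assert (Hrem : 0 <= comb m n - IZR k * g < g).
  { replace (comb m n) with (comb m n / g * g) by (field; lra).
    split; nra. }
  destruct (Req_dec (comb m n - IZR k * g) 0) as [E|E]; [lra|].
  assert (Hr : comb (m - k * m0) (n - k * n0) = comb m n - IZR k * g).
  { rewrite comb_minus, comb_scale; reflexivity. }
  specialize (Hmin (m - k * m0)%Z (n - k * n0)%Z).
  rewrite Hr in Hmin; lra.
Qed.

Lemma comb_pos_small : forall e, 0 < e -> exists m n, 0 < comb m n < e.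
Proof.
  destruct comb_pos_glb as [g [Hg0 [Hlb Happrox]]].
  intros e He.
  destruct (Req_dec g 0) as [->|Hgnz]; [apply Happrox; lra|].
  exfalso.
  destruct (Happrox (2 * g)) as [m1 [n1 [A1 B1]]]; [lra|].
  destruct (Req_dec (comb m1 n1) g) as [Emin|Enot].
  - assert (Hmin : forall m n, 0 < comb m n -> comb m1 n1 <= comb m n)
      by (rewrite Emin; exact Hlb).
    destruct (comb_multiple_of_min m1 n1 A1 Hmin 1 0) as [k1 Hk1].
    destruct (comb_multiple_of_min m1 n1 A1 Hmin 0 1) as [k2 Hk2].
    unfold comb at 1 in Hk1; unfold comb at 1 in Hk2; simpl in Hk1, Hk2.
    assert (Hk2nz : IZR k2 <> 0) by (intro Z0; rewrite Z0 in Hk2; lra).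
    apply Hirr; exists k1, k2; split.
    + intro Z0; apply Hk2nz; rewrite Z0; reflexivity.
    + replace u with (IZR k1 * comb m1 n1) by lra.
      replace v with (IZR k2 * comb m1 n1) by lra.
      field; split; lra.
  - (* two elements in (g, 2g) would differ by an element of (0, g) *)
    assert (C1 : g < comb m1 n1) by (specialize (Hlb m1 n1 A1); lra).
    destruct (Happrox _ C1) as [m2 [n2 [A2 B2]]].
    assert (g <= comb m2 n2) by (apply Hlb; exact A2).
    assert (Hd : 0 < comb (m1 - m2) (n1 - n2)) by (rewrite comb_minus; lra).
    specialize (Hlb _ _ Hd); rewrite comb_minus in Hlb; lra.
Qed.

Lemma comb_dense (x e : R) : 0 < e -> exists m n, x < comb m n < x + e.
Proof.
  intro He.
  destruct (comb_pos_small e He) as [mh [nh [Hh0 Hhe]]].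
  set (h := comb mh nh) in *.
  set (k := (Int_part (x / h) + 1)%Z).
  exists (k * mh)%Z, (k * nh)%Z.
  rewrite comb_scale; fold h.
  assert (Hk : x / h < IZR k <= x / h + 1).
  { destruct (base_Int_part (x / h)); unfold k; rewrite plus_IZR; simpl; lra. }
  replace x with (x / h * h) by (field; lra).
  split; nra.
Qed.

End DenseSubgroup.

Section CutAndProject.

Variables (th : R) (a b d : Z) (al : R).
Hypothesis Hd : (0 < d)%Z.

Lemma phi_rel_on_M (t y s r : R) :
  phi_rel th d t y (s, r, 0) <->
  exists m n, window th m n /\ t = pt th m n /\ s = star th m n /\
              r = Rmod y (/ IZR d).
Proof.
  split.
  - intros [m [n [W [_ [_ Heq]]]]].
    injection Heq as -> -> Ht.
    exists m, n; split; [exact W | split; [lra | split; reflexivity]].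
  - intros [m [n [W [-> [-> ->]]]]].
    exists m, n; split; [exact W | split; [lra | split; [auto | f_equal; ring]]].
Qed.

Lemma phi_line_cap_M_iff_Sset (q : R * R) :
  phi_line_cap_M th a b d al q <-> Sset th a b d al q.
Proof.
  destruct q as [s r]; unfold phi_line_cap_M, Sset; simpl.
  split.
  - intros [t Ht]; apply phi_rel_on_M in Ht.
    destruct Ht as [m [n [W [-> [-> ->]]]]].
    exists m, n; split; [exact W|].
    f_equal; f_equal; unfold Rdiv; ring.
  - intros [m [n [W Heq]]]; injection Heq as -> ->.
    exists (pt th m n); apply phi_rel_on_M.
    exists m, n; split; [exact W | split; [reflexivity | split; [reflexivity |]]].
    f_equal; unfold Rdiv; ring.
Qed.

Lemma lam_pt_plus_lamstar_star (m n : Z) :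
  lam th a b * pt th m n + lamstar th a b * star th m n = IZR (a * m + b * n).
Proof.
  unfold lam, pt, lamstar, star; rewrite plus_IZR, !mult_IZR.
  pose proof (sin2_cos2 th) as H; unfold Rsqr in H.
  transitivity ((IZR a * IZR m + IZR b * IZR n) * (sin th * sin th + cos th * cos th));
    [ring | rewrite H; ring].
Qed.

Lemma Rmod_lattice_point_on_line (m n : Z) :
  Rmod (al + lam th a b * pt th m n / IZR d) (/ IZR d) =
  Rmod (al - lamstar th a b / IZR d * star th m n) (/ IZR d).
Proof.
  assert (Hd0 : IZR d <> 0) by (apply not_0_IZR; lia).
  rewrite <- (Rmod_plus_mult (al - lamstar th a b / IZR d * star th m n) _
                (a * m + b * n) (Rinv_neq_0_compat _ Hd0)).
  rewrite <- lam_pt_plus_lamstar_star.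
  f_equal; field; exact Hd0.
Qed.

Lemma Sset_sub_Lset (q : R * R) : Sset th a b d al q -> Lset th a b d al q.
Proof.
  intros [m [n [W ->]]].
  split; [exact W | apply Rmod_lattice_point_on_line].
Qed.

Hypothesis Hcos : 0 < cos th.
Hypothesis Hirr : ~ exists p q : Z, q <> 0%Z /\ tan th = IZR p / IZR q.

Lemma Sset_dense_in_Lset : dense_in_M d (Sset th a b d al) (Lset th a b d al).
Proof.
  intros p [[Hp0 Hpe] Hp2] delta Hdel.
  set (ls := lamstar th a b).
  assert (Hls : 0 <= Rabs ls) by apply Rabs_pos.
  set (e := Rmin (eps th - fst p) (delta / (Rabs ls + 1))).
  assert (He : 0 < e).
  { apply Rmin_glb_lt; [lra | apply Rdiv_lt_0_compat; lra]. }
  assert (He1 : e <= eps th - fst p) by apply Rmin_l.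
  assert (He2 : e * (Rabs ls + 1) <= delta).
  { assert (e <= delta / (Rabs ls + 1)) by apply Rmin_r.
    assert (delta / (Rabs ls + 1) * (Rabs ls + 1) = delta) by (field; lra).
    nra. }
  assert (He3 : e <= delta) by nra.
  destruct (comb_dense (sin th) (cos th) Hcos Hirr (fst p) e He) as [m [n Hx]].
  change (comb (sin th) (cos th) m n) with (star th m n) in Hx.
  set (x := star th m n) in *.
  exists (x, Rmod (al + lam th a b * pt th m n / IZR d) (/ IZR d)); simpl.
  split; [exists m, n; split; [unfold window; fold x; lra | reflexivity] |].
  split; [rewrite Rabs_minus_sym, Rabs_pos_eq; lra |].
  rewrite Hp2, Rmod_lattice_point_on_line; fold ls x.
  destruct (Rmod_minus_Rmod (al - ls / IZR d * fst p) (al - ls / IZR d * x) (/ IZR d))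
    as [k Hk].
  exists k; rewrite Hk.
  assert (Hd1 : 1 <= IZR d) by (apply IZR_le; lia).
  replace (al - ls / IZR d * fst p - (al - ls / IZR d * x) + IZR k * / IZR d - IZR k / IZR d)
    with (ls * (x - fst p) * / IZR d) by (field; lra).
  rewrite !Rabs_mult, (Rabs_pos_eq (x - fst p)), (Rabs_pos_eq (/ IZR d)) by
    (try (left; apply Rinv_0_lt_compat); lra).
  assert (/ IZR d <= 1) by (rewrite <- Rinv_1; apply Rinv_le_contravar; lra).
  assert (0 <= Rabs ls * (x - fst p)) by (apply Rmult_le_pos; lra).
  apply Rle_lt_trans with (Rabs ls * (x - fst p)).
  - rewrite <- (Rmult_1_r (Rabs ls * (x - fst p))) at 2.
    apply Rmult_le_compat_l; lra.
  - nra.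
Qed.

End CutAndProject.

Theorem mainTheorem5 (th : R) (a b d : Z)
  (Hth : 0 < th < PI / 2)
  (Hirr : ~ exists p q : Z, q <> 0%Z /\ tan th = IZR p / IZR q)
  (Hd : (0 < d)%Z)
  (Hgcd : Z.gcd (Z.gcd a b) d = 1%Z) :
  forall al : R,
    (forall q, phi_line_cap_M th a b d al q <-> Sset th a b d al q) /\
    (forall q, Sset th a b d al q -> Lset th a b d al q) /\
    dense_in_M d (Sset th a b d al) (Lset th a b d al).
Proof.
  intro al.
  assert (Hcos : 0 < cos th) by (apply cos_gt_0; lra).
  split; [|split].
  - apply phi_line_cap_M_iff_Sset.
  - apply Sset_sub_Lset; exact Hd.
  - apply Sset_dense_in_Lset; assumption.
Qed.
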